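(* For every finite item set $M$ and every additive valuation $v$ on $M$ with nonnegative item values, $\mathrm{RMMS}(M,v,2)=\mathrm{MMS}(M,v,2)$.
   Context: A valuation $v:2^M\to\mathbb{R}_{\ge0}$ is additive if $v(S)=\sum_{e\in S}v(\{e\})$ for all $S\subseteq M$. $\mathrm{MMS}(M,v,n)$ is the maximum, over all partitions $P_1,\dots,P_n$ of $M$ into $n$ (possibly empty) parts, of $\min_j v(P_j)$. Residual maximin share: $\mathrm{RMMS}(M,v,n)$ is the largest real $t$ with the following property: for every $0\le k<n$ and every $k$ pairwise disjoint bundles $B_1,\dots,B_k\subseteq M$ with $v(B_j)<t$ for all $j$, the set $M\setminus(B_1\cup\dots\cup B_k)$ can be partitioned into $n-k$ bundles each of value (under $v$) at least $t$. *)

From mathcomp Require Import all_boot all_order all_algebra.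
Set Implicit Arguments. Unset Strict Implicit. Unset Printing Implicit Defensive.
Import Order.TTheory GRing.Theory Num.Theory.
Local Open Scope ring_scope.

Definition bval {R : realFieldType} {M : finType} (v : M -> R) (S : {set M}) : R :=
  \sum_(e in S) v e.

(* Partitions of M into n (possibly empty) parts are encoded as maps
   p : {ffun M -> 'I_n}; part j is [set e | p e == j]. *)
Definition part {M : finType} {n : nat} (p : {ffun M -> 'I_n}) (j : 'I_n) : {set M} :=
  [set e | p e == j].

(* min_j v(P_j) for a partition into k.+1 parts (idx = value of part 0,
   which is one of the minimised values, so the big min is the true min). *)
Definition min_bundle {R : realFieldType} {M : finType} {k : nat} (v : M -> R)
    (p : {ffun M -> 'I_k.+1}) : R :=
  \big[Num.min/bval v (part p ord0)]_(j < k.+1) bval v (part p j).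

(* MMS(M,v,n): maximum over all partitions into n parts of the minimal value.
   (n = 0 is meaningless; set to 0.)  idx = value of the trivial partition,
   which is one of the maximised values. *)
Definition MMS {R : realFieldType} {M : finType} (v : M -> R) (n : nat) : R :=
  match n with
  | 0 => 0
  | k.+1 =>
      \big[Num.max/min_bundle v ([ffun _ => ord0] : {ffun M -> 'I_k.+1})]_(p : {ffun M -> 'I_k.+1})
        min_bundle v p
  end.

Definition RMMS_prop {R : realFieldType} {M : finType} (v : M -> R) (n : nat) (t : R) : Prop :=
  forall (k : nat), (k < n)%N ->
  forall B : 'I_k -> {set M},
    (forall i j, i != j -> [disjoint B i & B j]) ->
    (forall i, bval v (B i) < t) ->
    exists C : 'I_(n - k) -> {set M},
      [/\ (forall i j, i != j -> [disjoint C i & C j]),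
          \bigcup_(j < n - k) C j = ~: (\bigcup_(i < k) B i)
        & forall j, t <= bval v (C j)].

Definition is_RMMS {R : realFieldType} {M : finType} (v : M -> R) (n : nat) (x : R) : Prop :=
  RMMS_prop v n x /\ (forall t, RMMS_prop v n t -> t <= x).

(* With two agents, k = 0 in the RMMS property asks for a 2-partition whose
   parts are both worth at least t, which is exactly t <= MMS.  For k = 1 a
   bundle B worth less than MMS leaves a complement worth more than
   v(M) - MMS >= MMS, since the two parts of an MMS partition show
   2 MMS <= v(M). *)
From mathcomp Require Import all_boot all_order all_algebra.
Set Implicit Arguments. Unset Strict Implicit. Unset Printing Implicit Defensive.
Import Order.TTheory GRing.Theory Num.Theory.
Local Open Scope ring_scope.

Lemma ord2_ind (P : 'I_2 -> Prop) : P ord0 -> P ord_max -> forall j, P j.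
Proof.
move=> P0 P1 [[|[|//]]] lt_j.
  by rewrite (_ : Ordinal lt_j = ord0) //; apply/val_inj.
by rewrite (_ : Ordinal lt_j = ord_max) //; apply/val_inj.
Qed.

Section Partitions.
Variable M : finType.

Lemma part_disjoint n (p : {ffun M -> 'I_n}) i j :
  i != j -> [disjoint part p i & part p j].
Proof.
move=> neq_ij; apply/pred0P => e /=; rewrite !inE.
by apply/negP => /andP[/eqP -> /eqP pe_j]; rewrite pe_j eqxx in neq_ij.
Qed.

Lemma bigcup_part n (p : {ffun M -> 'I_n}) : \bigcup_(j < n) part p j = setT.
Proof. by apply/setP => e; rewrite inE; apply/bigcupP; exists (p e); rewrite ?inE. Qed.

Lemma part_ord_max2 (p : {ffun M -> 'I_2}) : part p ord_max = ~: part p ord0.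
Proof. by apply/setP => e; rewrite !inE; case: (p e) => [[|[|k]]]. Qed.

Definition bipart (A : {set M}) : {ffun M -> 'I_2} :=
  [ffun e => if e \in A then ord0 else ord_max].

Lemma part_bipart0 A : part (bipart A) ord0 = A.
Proof. by apply/setP => e; rewrite !inE ffunE; case: (e \in A). Qed.

End Partitions.

Section Valuation.
Variables (R : realFieldType) (M : finType) (v : M -> R).

Lemma bval_setC (A : {set M}) : bval v A + bval v (~: A) = bval v setT.
Proof. by rewrite /bval [in RHS](big_setID A) /= setTI setTD. Qed.

Lemma le_min_bundle k (p : {ffun M -> 'I_k.+1}) t :
  (t <= min_bundle v p) = [forall j, t <= bval v (part p j)].
Proof.
apply/idP/forallP => [t_le j | t_le]; last exact: le_bigmin.
by apply: le_trans t_le _; apply: bigmin_le.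
Qed.

Lemma min_bundle_le_MMS k (p : {ffun M -> 'I_k.+1}) : min_bundle v p <= MMS v k.+1.
Proof. exact: le_bigmax. Qed.

Lemma MMS_attained k : exists p : {ffun M -> 'I_k.+1}, MMS v k.+1 = min_bundle v p.
Proof.
apply: (big_ind (fun y => exists p : {ffun M -> 'I_k.+1}, y = min_bundle v p)).
- by eexists.
- move=> _ _ [p ->] [q ->].
  by case: (leP (min_bundle v p) (min_bundle v q)) => _; [exists q | exists p].
- by move=> p _; exists p.
Qed.

Lemma le_MMS2 (A : {set M}) t :
  t <= bval v A -> t <= bval v (~: A) -> t <= MMS v 2.
Proof.
move=> tA tAC; apply: le_trans (min_bundle_le_MMS (bipart A)).
rewrite le_min_bundle; apply/forallP; apply: ord2_ind.
  by rewrite part_bipart0.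
by rewrite part_ord_max2 part_bipart0.
Qed.

Lemma MMS2_split : exists p : {ffun M -> 'I_2},
  MMS v 2 <= bval v (part p ord0) /\ MMS v 2 <= bval v (part p ord_max).
Proof.
have [p MMS_p] := MMS_attained 1; exists p.
by have := lexx (MMS v 2); rewrite {2}MMS_p le_min_bundle => /forallP; split.
Qed.

Lemma MMS2_double_le : MMS v 2 + MMS v 2 <= bval v setT.
Proof.
have [p [le0 le1]] := MMS2_split.
by rewrite -(bval_setC (part p ord0)) -part_ord_max2 lerD.
Qed.

Lemma RMMS_prop2_MMS : RMMS_prop v 2 (MMS v 2).
Proof.
case=> [|[|//]] _ B _ B_lt.
- have [p [le0 le1]] := MMS2_split.
  exists (part p); split; first exact: part_disjoint.
    by rewrite big_ord0 setC0 bigcup_part.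
  exact: ord2_ind.
- exists (fun=> ~: B ord0); split; first by move=> i j; rewrite !ord1 eqxx.
    by rewrite !big_ord1.
  move=> _; rewrite leNgt; apply/negP => C_lt.
  have := ltrD (B_lt ord0) C_lt.
  by rewrite bval_setC ltNge MMS2_double_le.
Qed.

Hypothesis v_ge0 : forall e, 0 <= v e.

Lemma bval_subset (A B : {set M}) : A \subset B -> bval v A <= bval v B.
Proof.
move=> sAB; rewrite /bval [in leRHS](big_setID A) /= (setIidPr sAB).
by rewrite lerDl sumr_ge0.
Qed.

Lemma RMMS_prop2_le_MMS t : RMMS_prop v 2 t -> t <= MMS v 2.
Proof.
move=> RMMS_t.
have [||C [C_disj _ C_ge]] := RMMS_t 0%N isT (fun=> set0); try by case.
apply: (le_MMS2 (C_ge ord0)); apply: le_trans (C_ge ord_max) _.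
by apply: bval_subset; rewrite -disjoints_subset; apply: C_disj.
Qed.

End Valuation.

Theorem mainTheorem10 (R : realFieldType) (M : finType) (v : M -> R) :
  (forall e, 0 <= v e) -> is_RMMS v 2 (MMS v 2).
Proof.
move=> v_ge0; split; first exact: RMMS_prop2_MMS.
exact: RMMS_prop2_le_MMS.
Qed.
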